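(* Let $k\ge1$, $1\le m\le d$, $p\in[1,\infty]$, and let $v$ be an $\mathbb{R}^k$-valued $m$-vector in $\mathbb{R}^d$. Then \[ |v|_{\mathrm{mass},p}=\inf\Big\{\sum_{i=1}^l\|z_i\|_p\,|v_i|:\ v=\sum_{i=1}^lz_i\otimes v_i,\ z_i\in\mathbb{R}^k,\ v_i\text{ simple }m\text{-vectors in }\mathbb{R}^d\Big\}. \]
   Context: An $\mathbb{R}^k$-valued $m$-vector is $v=\sum_iv_i e_i$ with $v_i\in\Lambda_m(\mathbb{R}^d)$; an $(\mathbb{R}^k)^*$-valued $m$-covector is $w=\sum_iw_ie_i^*$ with $w_i\in\Lambda^m(\mathbb{R}^d)$, paired by $\langle w,v\rangle=\sum_i\langle w_i,v_i\rangle$. With $q$ conjugate to $p$ and $\|\cdot\|_p,\|\cdot\|_q$ the $\ell^p,\ell^q$ norms on $\mathbb{R}^k$: $|w|_{\mathrm{com},p}:=\sup\{\|(\langle w_1,\tau\rangle,\dots,\langle w_k,\tau\rangle)\|_q:\tau\text{ simple }m\text{-vector},|\tau|\le1\}$ and $|v|_{\mathrm{mass},p}:=\sup\{\langle w,v\rangle:|w|_{\mathrm{com},p}\le1\}$. $|\cdot|$ is the Euclidean norm on $\Lambda_m(\mathbb{R}^d)$. *)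

From HB Require Import structures.
From mathcomp Require Import all_boot all_order all_algebra.
From mathcomp Require Import all_classical all_reals all_analysis.
Set Implicit Arguments. Unset Strict Implicit. Unset Printing Implicit Defensive.
Import Order.TTheory GRing.Theory Num.Theory.
Local Open Scope ring_scope.
Local Open Scope classical_set_scope.

(* Strictly increasing multi-indices 1 <= i_1 < ... < i_m <= d, indexing the
   standard (orthonormal) basis e_I of Lambda_m(R^d) and dual basis of Lambda^m. *)
Definition incr (m d : nat) :=
  {f : {ffun 'I_m -> 'I_d} | [forall i : 'I_m, forall j : 'I_m, (i < j)%N ==> (f i < f j)%N]}.

(* m-vectors (and m-covectors, via the dual basis) in R^d, by coordinates. *)
Definition mvec (R : realType) (m d : nat) := {ffun incr m d -> R}.

Definition mpair (R : realType) m d (w v : mvec R m d) : R :=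
  \sum_(I : incr m d) w I * v I.

Definition mnorm (R : realType) m d (v : mvec R m d) : R :=
  Num.sqrt (\sum_(I : incr m d) v I ^+ 2).

(* Wedge product u_1 /\ ... /\ u_m of the rows of M : its e_I coordinate is
   the m x m minor of M on the columns I. *)
Definition wedge (R : realType) m d (M : 'M[R]_(m, d)) : mvec R m d :=
  [ffun I : incr m d => \det (\matrix_(a < m, b < m) M a (val I b))].

Definition simple_mvec (R : realType) m d (t : mvec R m d) : Prop :=
  exists M : 'M[R]_(m, d), t = wedge M.

Definition lpnorm (R : realType) (p : \bar R) k (z : 'I_k -> R) : R :=
  match p with
  | +oo%E => \big[Num.max/0]_(i < k) `|z i|
  | (r%:E)%E => powR (\sum_(i < k) powR `|z i| r) r^-1
  | -oo%E => 0
  end.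

Definition conj_exp (R : realType) (p : \bar R) : \bar R :=
  match p with
  | +oo%E => 1%:E
  | (r%:E)%E => if r == 1 then +oo%E else (r / (r - 1))%:E
  | -oo%E => -oo%E
  end.

(* R^k-valued m-vectors / (R^k)^*-valued m-covectors: k-tuples of (co)vectors. *)
Definition kmvec (R : realType) k m d := 'I_k -> mvec R m d.

Definition kpair (R : realType) k m d (w v : kmvec R k m d) : R :=
  \sum_(i < k) mpair (w i) (v i).

Definition comass (R : realType) (p : \bar R) k m d (w : kmvec R k m d) : \bar R :=
  ereal_sup [set (lpnorm (conj_exp p) (fun i => mpair (w i) t))%:E
            | t in [set t : mvec R m d | simple_mvec t /\ mnorm t <= 1]].

Definition mass (R : realType) (p : \bar R) k m d (v : kmvec R k m d) : \bar R :=
  ereal_sup [set (kpair w v)%:E | w in [set w : kmvec R k m d | (comass p w <= 1%:E)%E]].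

Definition decomp_inf (R : realType) (p : \bar R) k m d (v : kmvec R k m d) : \bar R :=
  ereal_inf [set x : \bar R | exists (l : nat) (z : 'I_l -> 'I_k -> R)
                                     (vs : 'I_l -> mvec R m d),
     (forall i, simple_mvec (vs i)) /\
     (forall j : 'I_k, v j = \sum_(i < l) z i j *: vs i) /\
     x = (\sum_(i < l) lpnorm p (z i) * mnorm (vs i))%:E].

From mathcomp Require Import all_boot all_order all_algebra.
From mathcomp Require Import all_classical all_reals all_analysis.
From mathcomp Require Import ring lra.
Import Order.TTheory GRing.Theory Num.Theory.

(* Both sides are norms of [v]: the right-hand side [N] is the gauge whose unit
   ball is the convex hull of the tensors [z (x) t] with [||z||_p |t| <= 1].
   If [comass_p w <= 1] then [<w, z (x) t> <= ||z||_p |t|] by Hoelder's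
   inequality, hence [mass_p <= N].  Conversely [N] is sublinear on the
   finite-dimensional space of R^k-valued m-vectors, so Hahn-Banach gives a
   linear form [w <= N] with [w v = N v]; testing [w] on the tensors [z (x) t]
   and using that l^q is the dual of l^p shows [comass_p w <= 1], hence
   [N v <= mass_p v]. *)

Set Implicit Arguments.
Unset Strict Implicit.
Unset Printing Implicit Defensive.

Local Open Scope ring_scope.
Local Open Scope classical_set_scope.

Lemma exists_between (R : realType) (U : Type) (P : U -> Prop) (f g : U -> R) (u0 : U) :
  P u0 -> (forall u u', P u -> P u' -> f u <= g u') ->
  exists c, (forall u, P u -> f u <= c) /\ (forall u, P u -> c <= g u).
Proof.
move=> Pu0 le_fg; have f_ub : ubound (f @` P) (g u0) by move=> _ [u Pu <-]; exact: le_fg.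
exists (sup (f @` P)); split => [u Pu|u Pu].
  by apply: ub_le_sup; [exists (g u0) | exists u].
by apply: ge_sup; [exists (f u0), u0 | move=> _ [u' Pu' <-]; exact: le_fg].
Qed.

Section FunDot.
Variables (R : realType) (T : finType).
Implicit Types (a x y : T -> R).

Definition fdot (a x : T -> R) : R := \sum_t a t * x t.

Lemma fdotDr a x y : fdot a (x + y) = fdot a x + fdot a y.
Proof. by rewrite /fdot -big_split; apply: eq_bigr => t _; rewrite mulrDr. Qed.

Lemma fdotZr a (l : R) x : fdot a (l *: x) = l * fdot a x.
Proof. by rewrite /fdot mulr_sumr; apply: eq_bigr => t _; rewrite mulrCA. Qed.

Lemma fdotNr a x : fdot a (- x) = - fdot a x.
Proof. by rewrite /fdot -sumrN; apply: eq_bigr => t _; rewrite mulrN. Qed.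

End FunDot.

Section DominatedFunctional.
Variables (R : realType) (T : finType) (p : (T -> R) -> R).
Hypothesis p_subadd : forall x y, p (x + y) <= p x + p y.
Hypothesis p_homo : forall l x, 0 < l -> p (l *: x) <= l * p x.

Lemma sublinear0 : p 0 = 0.
Proof.
have half_gt0 : 0 < 2^-1 :> R by rewrite invr_gt0.
have := p_homo 0 (ltr0Sn R 1); have := p_homo 0 half_gt0.
rewrite !scaler0; lra.
Qed.

Lemma sublinearZ l x : 0 <= l -> p (l *: x) = l * p x.
Proof.
rewrite le_eqVlt => /predU1P[<-|l_gt0]; first by rewrite scale0r mul0r sublinear0.
have il_gt0 : 0 < l^-1 by rewrite invr_gt0.
apply/le_anti; rewrite p_homo //=.
have := p_homo (l *: x) il_gt0; rewrite scalerA mulVf ?gt_eqF // scale1r => le_px.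
by rewrite -(ler_pM2l il_gt0) mulrA mulVf ?gt_eqF // mul1r.
Qed.

Definition supported (s : seq T) (x : T -> R) := forall t, t \notin s -> x t = 0.

Definition fdelta (t0 : T) : T -> R := fun t => (t == t0)%:R.

Lemma dominated_extension_coef s t0 a :
    (forall x, supported s x -> fdot a x <= p x) ->
  exists c, forall y l, supported s y -> fdot a y + l * c <= p (y + l *: fdelta t0).
Proof.
move=> dom_a; set e := fdelta t0.
have [c [c_lb c_ub]] : exists c,
    (forall w, supported s w -> fdot a w - p (w - e) <= c) /\
    (forall w, supported s w -> c <= p (w + e) - fdot a w).
  apply: (exists_between (u0 := 0)) => // w w' sw sw'.
  have sww' : supported s (w + w') by move=> t ts; rewrite !fctE sw ?sw' ?addr0.
  have := dom_a _ sww'; have := p_subadd (w - e) (w' + e).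
  by rewrite fdotDr addrACA addNr addr0; lra.
have scaled y l : supported s y -> supported s (l^-1 *: y).
  by move=> sy t ts; rewrite !fctE sy ?scaler0.
exists c => y l sy; have [l_lt0|l_gt0|->] := ltgtP l 0; last first.
- by rewrite mul0r scale0r !addr0; exact: dom_a.
- have := c_ub _ (scaled y l sy).
  have -> : l^-1 *: y + e = l^-1 *: (y + l *: e).
    by rewrite scalerDr scalerA mulVf ?scale1r // lt0r_neq0.
  rewrite sublinearZ ?invr_ge0 ?(ltW l_gt0) // fdotZr -mulrBr => le_c.
  have := ler_wpM2l (ltW l_gt0) le_c.
  by rewrite mulrA mulfV ?mul1r ?lt0r_neq0 //; lra.
- have ml_gt0 : 0 < - l by rewrite oppr_gt0.
  have := c_lb _ (scaled y (- l) sy).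
  have -> : (- l)^-1 *: y - e = (- l)^-1 *: (y + l *: e).
    by rewrite scalerDr scalerA invrN mulNr mulVf ?scaleN1r // ltr0_neq0.
  rewrite sublinearZ ?invr_ge0 ?(ltW ml_gt0) // fdotZr -mulrBr => le_c.
  have := ler_wpM2l (ltW ml_gt0) le_c.
  by rewrite mulrA mulfV ?mul1r ?lt0r_neq0 //; lra.
Qed.

Lemma dominated_extension s t0 a :
    (forall x, supported s x -> fdot a x <= p x) ->
  exists c, forall x, supported (t0 :: s) x ->
    fdot (fun t => if t == t0 then c else a t) x <= p x.
Proof.
move=> /(dominated_extension_coef t0) [c dom_c]; exists c => x sx.
set a' := fun t => _; set e := fdelta t0; pose y := x - x t0 *: e.
have y_t0 : y t0 = 0 by rewrite /y !fctE /e /fdelta eqxx scaler1 subrr.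
have sy : supported s y.
  move=> t ts; have [->//|tt0] := eqVneq t t0.
  by rewrite /y !fctE /e /fdelta (negbTE tt0) scaler0 subr0 sx // in_cons negb_or tt0.
have a'y : fdot a' y = fdot a y.
  by apply: eq_bigr => t _; rewrite /a'; case: eqP => [->|]; rewrite ?y_t0 ?mulr0.
have a'e : fdot a' e = c.
  rewrite /fdot (bigD1 t0) //= big1 => [|t /negbTE tt0]; last by rewrite /e /fdelta tt0 mulr0.
  by rewrite /a' /e /fdelta !eqxx mulr1 addr0.
by rewrite -(subrK (x t0 *: e) x) -/y fdotDr fdotZr a'y a'e; exact: dom_c.
Qed.

Lemma dominated_exists : exists a, forall x, fdot a x <= p x.
Proof.
suff [a dom_a] : exists a, forall x, supported (enum T) x -> fdot a x <= p x.
  by exists a => x; apply: dom_a => t; rewrite mem_enum.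
elim: (enum T) => [|t0 s [a /(dominated_extension t0) [c dom_c]]].
  exists 0 => x x0; have -> : x = 0 by apply: funext => t; exact: x0.
  by rewrite sublinear0 /fdot big1 // => t _; rewrite mulr0.
by exists (fun t => if t == t0 then c else a t).
Qed.

End DominatedFunctional.

Section HahnBanach.
Variables (R : realType) (T : finType) (p : (T -> R) -> R).
Hypothesis p_subadd : forall x y, p (x + y) <= p x + p y.
Hypothesis p_homo : forall l x, 0 < l -> p (l *: x) <= l * p x.
Variable v : T -> R.

(* [pdir] is sublinear, lies below [p] and satisfies [pdir (- v) <= - p v], so
   every linear functional below [pdir] agrees with [p] at [v]. *)
Definition pdir (x : T -> R) : R :=
  inf [set p (x + s *: v) - s * p v | s in [set s | 0 <= s]].

Lemma pdir_le x s : 0 <= s -> pdir x <= p (x + s *: v) - s * p v.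
Proof.
move=> s_ge0; apply: ge_inf; last by exists s.
exists (- p (- x)) => _ [s' s'_ge0 <-].
have := p_subadd (x + s' *: v) (- x).
by rewrite addrAC subrr add0r (sublinearZ p_homo) //; lra.
Qed.

Lemma pdir_ge x y :
  (forall s, 0 <= s -> y <= p (x + s *: v) - s * p v) -> y <= pdir x.
Proof.
move=> y_lb; apply: lb_le_inf; first by exists (p (x + 0 *: v) - 0 * p v); exists 0 => /=.
by move=> _ [s s_ge0 <-]; exact: y_lb.
Qed.

Lemma pdir_subadd x y : pdir (x + y) <= pdir x + pdir y.
Proof.
rewrite -lerBlDr; apply: pdir_ge => s s_ge0; rewrite lerBlDr -lerBlDl.
apply: pdir_ge => s' s'_ge0; rewrite lerBlDl.
have := pdir_le (x + y) (addr_ge0 s_ge0 s'_ge0).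
have := p_subadd (x + s *: v) (y + s' *: v).
by rewrite addrACA -scalerDl; lra.
Qed.

Lemma pdir_homo l x : 0 < l -> pdir (l *: x) <= l * pdir x.
Proof.
move=> l_gt0; rewrite mulrC -ler_pdivrMr //; apply: pdir_ge => s s_ge0.
have := pdir_le (l *: x) (mulr_ge0 (ltW l_gt0) s_ge0).
rewrite -scalerA -scalerDr (sublinearZ p_homo) ?(ltW l_gt0) // -mulrA -mulrBr.
by rewrite ler_pdivrMr // mulrC.
Qed.

Lemma pdir_le_p x : pdir x <= p x.
Proof. by have := pdir_le x (lexx 0); rewrite scale0r addr0 mul0r subr0. Qed.

Lemma pdir_oppv : pdir (- v) <= - p v.
Proof. by have := pdir_le (- v) ler01; rewrite scale1r addNr (sublinear0 p_homo) mul1r sub0r. Qed.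

Lemma hahn_banach : exists a, (forall x, fdot a x <= p x) /\ fdot a v = p v.
Proof.
have [a dom_a] := dominated_exists pdir_subadd pdir_homo.
exists a; split => [x|]; first exact: le_trans (dom_a x) (pdir_le_p x).
apply/le_anti; rewrite (le_trans (dom_a v) (pdir_le_p v)) /=.
by rewrite -lerN2 -fdotNr (le_trans (dom_a _) pdir_oppv).
Qed.

End HahnBanach.

Section LpNorm.
Variable R : realType.
Implicit Types (p : \bar R) (k : nat).

Lemma lpnorm_ge0 p k (z : 'I_k -> R) : 0 <= lpnorm p z.
Proof. by case: p => [r||] //=; [exact: powR_ge0 | exact: bigmax_ge_id]. Qed.

Lemma lpnorm1E k (z : 'I_k -> R) : lpnorm 1%:E z = \sum_i `|z i|.
Proof.
rewrite /= invr1 powRr1; last by apply: sumr_ge0 => i _; exact: powR_ge0.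
by apply: eq_bigr => i _; rewrite powRr1.
Qed.

Lemma conj_exp1 : conj_exp (1%:E : \bar R) = +oo%E.
Proof. by rewrite /= eqxx. Qed.

Lemma lpnormZ p k (c : R) (z : 'I_k -> R) : (0 < p)%E ->
  lpnorm p (fun i => c * z i) = `|c| * lpnorm p z.
Proof.
case: p => [r||] //= r_gt0.
  rewrite lte_fin in r_gt0.
  under eq_bigr do rewrite normrM powRM //.
  have sum_ge0 : 0 <= \sum_i `|z i| `^ r by apply: sumr_ge0 => i _; exact: powR_ge0.
  by rewrite -mulr_sumr powRM ?powR_ge0 // -powRrM mulfV ?gt_eqF // powRr1.
apply: (big_rec2 (fun y1 y2 => y1 = `|c| * y2)); first by rewrite mulr0.
by move=> i y1 y2 _ ->; rewrite maxr_pMr // normrM.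
Qed.

Lemma lpnorm0 p k : (0 < p)%E -> lpnorm p (fun _ : 'I_k => 0) = 0.
Proof.
by move=> p_gt0; have := lpnormZ 0 (fun _ : 'I_k => 0) p_gt0; rewrite normr0 !mul0r.
Qed.

Lemma lpnorm_eq0 p k (z : 'I_k -> R) : (0 < p)%E -> lpnorm p z = 0 -> z = 0.
Proof.
case: p => [r||] //= _ z0; apply/funext => j; apply/normr0_eq0.
  have /psumr_eq0P := powR_eq0_eq0 z0.
  by move=> /(_ (fun i _ => powR_ge0 _ _) j isT) /powR_eq0_eq0.
by apply/le_anti; rewrite normr_ge0 andbT -z0 le_bigmax.
Qed.

Lemma conj_exp_ge1 p : (1%:E <= p)%E -> (1%:E <= conj_exp p)%E.
Proof.
case: p => [r||] //=; rewrite lee_fin => r_ge1.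
case: eqP => [_|/eqP r_neq1]; first exact: leey.
have r_gt1 : 1 < r by rewrite lt_neqAle eq_sym r_neq1.
by rewrite lee_fin ler_pdivlMr ?subr_gt0 //; lra.
Qed.

Lemma powR_le1 (x s : R) : 0 < s -> 0 <= x -> (x `^ s <= 1) = (x <= 1).
Proof.
move=> s_gt0 x_ge0; apply/idP/idP => [|x_le1].
  apply: contraLR; rewrite -!ltNge => x_gt1.
  have := @gt0_ltr_powR _ s s_gt0 1 x; rewrite powR1 !nnegrE ler01; exact.
have := @ge0_ler_powR _ s (ltW s_gt0) x 1; rewrite powR1 !nnegrE ler01; exact.
Qed.

Lemma conj_exp_gt1 (r : R) : 1 < r ->
  exists q, [/\ conj_exp r%:E = q%:E, 1 < q & r^-1 + q^-1 = 1].
Proof.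
move=> r_gt1; exists (r / (r - 1)); split; first by rewrite /= gt_eqF.
  by rewrite ltr_pdivlMr ?subr_gt0 //; lra.
by rewrite invf_div; field; rewrite gt_eqF //; lra.
Qed.

Lemma lpnorm_finE (r : R) k (z : 'I_k -> R) :
  lpnorm r%:E z = (\sum_i `|z i| `^ r) `^ r^-1.
Proof. by []. Qed.

Lemma lpnorm_inftyE k (z : 'I_k -> R) : lpnorm +oo%E z = \big[Num.max/0]_i `|z i|.
Proof. by []. Qed.

Lemma holder_le1 p k (z b : 'I_k -> R) : (1%:E <= p)%E ->
  lpnorm p z <= 1 -> lpnorm (conj_exp p) b <= 1 -> \sum_i `|z i| * `|b i| <= 1.
Proof.
case: p => [r||] // p_ge1 z_le1 b_le1; last first.
  rewrite lpnorm1E in b_le1; apply: le_trans b_le1; apply: ler_sum => i _.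
  by rewrite ler_piMl // (le_trans _ z_le1) // lpnorm_inftyE le_bigmax.
rewrite lee_fin le_eqVlt in p_ge1; case/predU1P: p_ge1 => [r1|r_gt1].
  rewrite -r1 lpnorm1E in z_le1; apply: le_trans z_le1; apply: ler_sum => i _.
  by rewrite ler_piMr // (le_trans _ b_le1) // -r1 conj_exp1 lpnorm_inftyE le_bigmax.
have r_gt0 : 0 < r := lt_trans ltr01 r_gt1.
have [q [conj_q q_gt1 rq]] := conj_exp_gt1 r_gt1; have q_gt0 := lt_trans ltr01 q_gt1.
have sum_ge0 (y : 'I_k -> R) e : 0 <= \sum_i `|y i| `^ e.
  by apply: sumr_ge0 => i _; exact: powR_ge0.
rewrite lpnorm_finE powR_le1 ?invr_gt0 // in z_le1.
rewrite conj_q lpnorm_finE powR_le1 ?invr_gt0 // in b_le1.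
have young i : `|z i| * `|b i| <= `|z i| `^ r / r + `|b i| `^ q / q.
  exact: conjugate_powR.
apply: le_trans (ler_sum _ (fun i _ => young i)) _.
by rewrite big_split -!mulr_suml -rq lerD // ler_piMl // invr_ge0 ltW.
Qed.

Lemma holder p k (z b : 'I_k -> R) : (1%:E <= p)%E ->
  \sum_i z i * b i <= lpnorm p z * lpnorm (conj_exp p) b.
Proof.
move=> p_ge1; have p_gt0 : (0 < p)%E by apply: lt_le_trans p_ge1; rewrite lte_fin.
have q_gt0 : (0 < conj_exp p)%E.
  by apply: lt_le_trans (conj_exp_ge1 p_ge1); rewrite lte_fin.
set A := lpnorm p z; set B := lpnorm (conj_exp p) b.
have [A0|A_neq0] := eqVneq A 0.
  by rewrite A0 mul0r (lpnorm_eq0 p_gt0 A0) big1 // => i _; rewrite mul0r.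
have [B0|B_neq0] := eqVneq B 0.
  by rewrite B0 mulr0 (lpnorm_eq0 q_gt0 B0) big1 // => i _; rewrite mulr0.
have A_gt0 : 0 < A by rewrite lt0r A_neq0 lpnorm_ge0.
have B_gt0 : 0 < B by rewrite lt0r B_neq0 lpnorm_ge0.
have := holder_le1 (z := fun i => A^-1 * z i) (b := fun i => B^-1 * b i) p_ge1.
rewrite !lpnormZ // !ger0_norm ?invr_ge0 ?(ltW A_gt0) ?(ltW B_gt0) // -/A -/B.
rewrite !mulVf // => /(_ (lexx _) (lexx _)) le1.
have -> : \sum_i z i * b i = A * B * \sum_i (A^-1 * z i) * (B^-1 * b i).
  by rewrite mulr_sumr; apply: eq_bigr => i _; field; rewrite A_neq0 B_neq0.
rewrite -[X in _ <= X]mulr1 ler_pM2l ?mulr_gt0 //.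
apply: le_trans (ler_norm _) _; apply: le_trans (ler_norm_sum _ _ _) _.
by apply: le_trans le1; apply: ler_sum => i _; rewrite normrM.
Qed.

Lemma sum_delta k (j : 'I_k) (F : 'I_k -> R) : \sum_i (i == j)%:R * F i = F j.
Proof.
rewrite (bigD1 j) //= big1 => [|i /negbTE ->]; last by rewrite mul0r.
by rewrite eqxx mul1r addr0.
Qed.

Lemma lpnorm_conj_le1_fin (r : R) k (b : 'I_k -> R) : 1 < r ->
  (forall z, \sum_i z i * b i <= lpnorm r%:E z) -> lpnorm (conj_exp r%:E) b <= 1.
Proof.
move=> r_gt1 b_dual; have [q [-> q_gt1 rq]] := conj_exp_gt1 r_gt1.
have q_gt0 := lt_trans ltr01 q_gt1; have r_gt0 := lt_trans ltr01 r_gt1.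
have q1r : (q - 1) * r = q.
  have : q * r * (r^-1 + q^-1) = q * r by rewrite rq mulr1.
  rewrite mulrDr (mulfK (lt0r_neq0 r_gt0)) (mulrC q r) (mulfK (lt0r_neq0 q_gt0)).
  by move=> qr; rewrite mulrBl mul1r mulrC -qr addrK.
set S := \sum_i `|b i| `^ q.
have S_ge0 : 0 <= S by apply: sumr_ge0 => i _; exact: powR_ge0.
(* the extremal vector of Hoelder's inequality for [b] *)
pose z i := Num.sg (b i) * `|b i| `^ (q - 1).
have zb : \sum_i z i * b i = S.
  by apply: eq_bigr => i _; rewrite /z mulrAC -normrEsg mulr_powRB1 ?normr_ge0.
have z_norm : lpnorm r%:E z = S `^ r^-1.
  rewrite lpnorm_finE; congr (_ `^ _); apply: eq_bigr => i _.
  rewrite /z normrM normr_sg ger0_norm ?powR_ge0 //.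
  have [->|b_neq0] := eqVneq (b i) 0; last by rewrite mul1r -powRrM q1r.
  by rewrite /= mul0r normr0 !powR0 // lt0r_neq0.
have := b_dual z; rewrite zb z_norm lpnorm_finE -/S => S_le.
have [S0|S_neq0] := eqVneq S 0.
  by rewrite S0 powR0 ?ler01 ?invr_eq0 ?(lt0r_neq0 q_gt0).
have -> : q^-1 = 1 - r^-1 by rewrite -rq addrAC subrr add0r.
rewrite powRB; last by rewrite S_neq0 implybT.
rewrite powRr1; last exact: S_ge0.
have Sr_gt0 : 0 < S `^ r^-1 by apply: powR_gt0; rewrite lt0r S_neq0.
by rewrite (ler_pdivrMr _ _ Sr_gt0) mul1r.
Qed.

Lemma lpnorm_conj_le1 p k (b : 'I_k -> R) : (1%:E <= p)%E ->
  (forall z, \sum_i z i * b i <= lpnorm p z) -> lpnorm (conj_exp p) b <= 1.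
Proof.
have sg_le1 (x : R) : `|Num.sg x| <= 1 by rewrite normr_sg; case: (_ != 0).
case: p => [r||] // p_ge1 b_dual; last first.
  rewrite lpnorm1E; have := b_dual (fun i => Num.sg (b i)).
  under eq_bigr do rewrite -normrEsg.
  by move=> /le_trans; apply; rewrite lpnorm_inftyE; apply: bigmax_le.
rewrite lee_fin le_eqVlt in p_ge1; case/predU1P: p_ge1 => [r1|r_gt1].
  rewrite -r1 conj_exp1 lpnorm_inftyE; apply: bigmax_le => // j _.
  have := b_dual (fun i => (i == j)%:R * Num.sg (b j)); rewrite -r1 lpnorm1E.
  under eq_bigr do rewrite -mulrA.
  under [X in _ <= X]eq_bigr do rewrite normrM normr_nat.
  by rewrite !sum_delta -normrEsg => /le_trans; apply.
exact: lpnorm_conj_le1_fin.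
Qed.

End LpNorm.

Section MultiVectors.
Variables (R : realType) (m d : nat).
Implicit Types (I J : incr m d) (t : mvec R m d).

Lemma incr_lt I (a b : 'I_m) : (a < b)%N -> (val I a < val I b)%N.
Proof. by case: I => f /= /forallP/(_ a)/forallP/(_ b)/implyP. Qed.

Lemma incr_inj I : injective (val I).
Proof.
move=> a b Iab; case: (ltngtP a b) => [ab|ba|/val_inj //].
  by have := incr_lt I ab; rewrite Iab ltnn.
by have := incr_lt I ba; rewrite Iab ltnn.
Qed.

Definition incr_seq I : seq nat := [seq val (val I a) | a <- enum 'I_m].

Lemma incr_seq_sorted I : sorted ltn (incr_seq I).
Proof.
rewrite sorted_map; apply: (@sub_sorted _ (relpre val ltn)) => [a b|]; first exact: incr_lt.
by rewrite -sorted_map val_enum_ord iota_ltn_sorted.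
Qed.

Lemma incr_subset_eq I J : {subset incr_seq I <= incr_seq J} -> I = J.
Proof.
move=> sub_IJ; have uniq_I := sorted_uniq ltn_trans ltnn (incr_seq_sorted I).
have size_JI : (size (incr_seq J) <= size (incr_seq I))%N by rewrite !size_map.
have [_ eq_IJ] := uniq_min_size uniq_I sub_IJ size_JI.
have /eq_in_map eqIJ := irr_sorted_eq ltn_trans ltnn (incr_seq_sorted I) (incr_seq_sorted J) eq_IJ.
by apply/val_inj/ffunP => a; apply/val_inj/eqIJ; rewrite mem_enum.
Qed.

Definition mbasis I : mvec R m d := [ffun J => (J == I)%:R].

Definition mbasis_mx I : 'M[R]_(m, d) := \matrix_(a, b) (b == val I a)%:R.

Lemma wedge_mbasis_mx I : wedge (mbasis_mx I) = mbasis I.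
Proof.
apply/ffunP => J; rewrite !ffunE; have [->|JI] := eqVneq J I.
  rewrite -[true%:R](det1 R m); congr (\det _); apply/matrixP => a b.
  by rewrite !mxE (inj_eq (@incr_inj I)) eq_sym.
have /allPn [_ /mapP [a _ ->] Ia_notin] : ~~ all (mem (incr_seq J)) (incr_seq I).
  by apply: contra JI => /allP /incr_subset_eq ->.
rewrite (expand_det_row _ a) big1 // => b _; rewrite !mxE.
case: eqP => [Jb|]; last by rewrite mul0r.
by case/negP: Ia_notin; apply/mapP; exists b; rewrite ?mem_enum // Jb.
Qed.

Lemma mbasis_simple I : simple_mvec (mbasis I).
Proof. by exists (mbasis_mx I); rewrite wedge_mbasis_mx. Qed.

Lemma mnorm_ge0 t : 0 <= mnorm t.
Proof. exact: sqrtr_ge0. Qed.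

Lemma mnormZ (c : R) t : mnorm (c *: t) = `|c| * mnorm t.
Proof.
rewrite /mnorm (eq_bigr (fun I => c ^+ 2 * t I ^+ 2)) => [|I _]; last by rewrite ffunE exprMn.
by rewrite -mulr_sumr sqrtrM ?sqr_ge0 // sqrtr_sqr.
Qed.

Lemma mnorm_eq0 t : mnorm t = 0 -> t = 0.
Proof.
move/eqP; rewrite sqrtr_eq0 => sum_le0.
have /psumr_eq0P sum0 : \sum_I t I ^+ 2 = 0.
  by apply/le_anti; rewrite sum_le0 sumr_ge0 // => I _; exact: sqr_ge0.
apply/ffunP => I; rewrite ffunE; apply/eqP; rewrite -sqrf_eq0.
by apply/eqP/sum0 => // J _; exact: sqr_ge0.
Qed.

Lemma mvecZE (c : R) t I : (c *: t) I = c * t I.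
Proof. by rewrite ffunE. Qed.

Lemma mpairZr (w : mvec R m d) (c : R) t : mpair w (c *: t) = c * mpair w t.
Proof. by rewrite /mpair mulr_sumr; apply: eq_bigr => I _; rewrite ffunE mulrCA. Qed.

Lemma mpair_sumr (w : mvec R m d) l (c : 'I_l -> R) (u : 'I_l -> mvec R m d) :
  mpair w (\sum_(i < l) c i *: u i) = \sum_(i < l) c i * mpair w (u i).
Proof.
rewrite /mpair (eq_bigr (fun I => \sum_(i < l) w I * (c i * u i I))) => [|I _].
  rewrite exchange_big; apply: eq_bigr => i _; rewrite mulr_sumr.
  by apply: eq_bigr => I _; rewrite mulrCA.
by rewrite sum_ffunE mulr_sumr; apply: eq_bigr => i _; rewrite ffunE.
Qed.

Lemma mpair0r (w : mvec R m d) : mpair w 0 = 0.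
Proof. by rewrite /mpair big1 // => I _; rewrite ffunE mulr0. Qed.

Lemma simple_mvecZ (c : R) t : (0 < m)%N -> simple_mvec t -> simple_mvec (c *: t).
Proof.
move=> m_gt0 [M ->]; pose a0 : 'I_m := Ordinal m_gt0.
pose D : 'rV[R]_m := \row_a (if a == a0 then c else 1).
exists (diag_mx D *m M); apply/ffunP => J; rewrite !ffunE.
have -> : \matrix_(a, b) (diag_mx D *m M) a (val J b) = diag_mx D *m \matrix_(a, b) M a (val J b).
  by apply/matrixP => a b; rewrite !mul_diag_mx !mxE.
rewrite det_mulmx det_diag (bigD1 a0) //= big1 => [|a /negbTE a_neq0]; last by rewrite mxE a_neq0.
by rewrite mxE eqxx mulr1.
Qed.

End MultiVectors.

Arguments mbasis {R m d}.

Section DecompositionNorm.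
Variables (R : realType) (k m d : nat) (p : \bar R).
Hypothesis p_ge1 : (1%:E <= p)%E.
Implicit Types (u v x y : kmvec R k m d).

Let p_gt0 : (0 < p)%E. Proof. by apply: lt_le_trans p_ge1; rewrite lte_fin. Qed.

Definition decomp_costs v : set R :=
  [set r | exists l (z : 'I_l -> 'I_k -> R) (vs : 'I_l -> mvec R m d),
     (forall i, simple_mvec (vs i)) /\
     (forall j, v j = \sum_(i < l) z i j *: vs i) /\
     r = \sum_(i < l) lpnorm p (z i) * mnorm (vs i)].

Definition decomp_norm v : R := inf (decomp_costs v).

Lemma decomp_costs_ge0 v r : decomp_costs v r -> 0 <= r.
Proof.
case=> l [z [vs [_ [_ ->]]]]; apply: sumr_ge0 => i _.
by rewrite mulr_ge0 ?lpnorm_ge0 ?mnorm_ge0.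
Qed.

Lemma decomp_costs_lb v : has_lbound (decomp_costs v).
Proof. by exists 0 => r /decomp_costs_ge0. Qed.

Lemma decomp_costs0 : decomp_costs 0 0.
Proof.
by exists 0%N, (fun _ _ => 0), (fun _ => 0); split; [case | split => [j|]; rewrite big_ord0].
Qed.

Lemma decomp_costs_tensor (z : 'I_k -> R) t : simple_mvec t ->
  decomp_costs (fun j => z j *: t) (lpnorm p z * mnorm t).
Proof.
by exists 1%N, (fun _ => z), (fun _ => t); split => //; split => [j|]; rewrite big_ord1.
Qed.

Lemma decomp_costsD x y r s : decomp_costs x r -> decomp_costs y s ->
  decomp_costs (x + y) (r + s).
Proof.
case=> l1 [z1 [vs1 [s1 [e1 ->]]]] [l2 [z2 [vs2 [s2 [e2 ->]]]]].
pose z i := match fintype.split i with inl a => z1 a | inr b => z2 b end.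
pose vs i := match fintype.split i with inl a => vs1 a | inr b => vs2 b end.
exists (l1 + l2)%N, z, vs; split; first by move=> i; rewrite /vs; case: fintype.split.
have sl (a : 'I_l1) : fintype.split (lshift l2 a) = inl a := unsplitK (inl a).
have sr (b : 'I_l2) : fintype.split (rshift l1 b) = inr b := unsplitK (inr b).
split => [j|]; rewrite big_split_ord /=.
  by rewrite fctE e1 e2; congr (_ + _); apply: eq_bigr => i _; rewrite /z /vs ?sl ?sr.
by congr (_ + _); apply: eq_bigr => i _; rewrite /z /vs ?sl ?sr.
Qed.

Lemma decomp_costsZ (c : R) x r : decomp_costs x r -> decomp_costs (c *: x) (`|c| * r).
Proof.
case=> l [z [vs [s_vs [e ->]]]]; exists l, (fun i j => c * z i j), vs.
split => //; split => [j|]; first by rewrite fctE e scaler_sumr; under eq_bigr do rewrite scalerA.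
by rewrite mulr_sumr; apply: eq_bigr => i _; rewrite lpnormZ // mulrA.
Qed.

Lemma decomp_costs_neq0 v : decomp_costs v !=set0.
Proof.
have -> : v = \sum_(t : 'I_k * incr m d) (fun j => ((j == t.1)%:R * v t.1 t.2) *: mbasis t.2).
  apply/funext => j; apply/ffunP => J; rewrite fct_sumE sum_ffunE.
  rewrite (bigD1 (j, J)) //= big1 => [|[j' J'] /= neq]; rewrite mvecZE ffunE.
    by rewrite !eqxx mul1r mulr1 addr0.
  have [jj'|] := eqVneq j j'; last by rewrite mul0r mul0r.
  by move: neq; rewrite jj' xpair_eqE eqxx /= eq_sym => /negbTE ->; rewrite mulr0.
elim/big_ind: _ => [|x y [r xr] [s ys]|t _]; first by exists 0; exact: decomp_costs0.
  by exists (r + s); exact: decomp_costsD.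
by eexists; apply: decomp_costs_tensor; exact: mbasis_simple.
Qed.

Lemma decomp_infE v : decomp_inf p v = (decomp_norm v)%:E.
Proof.
rewrite /decomp_norm -(ereal_inf_EFin (decomp_costs_lb v) (decomp_costs_neq0 v)).
congr ereal_inf; apply/seteqP; split => x.
  by case=> l [z [vs [s_vs [e ->]]]]; eexists; first by exists l, z, vs.
by case=> r [l [z [vs [s_vs [e ->]]]]] <-; exists l, z, vs.
Qed.

Lemma decomp_norm_le v r : decomp_costs v r -> decomp_norm v <= r.
Proof. by move=> vr; apply: ge_inf => //; exact: decomp_costs_lb. Qed.

Lemma decomp_norm_ge v s : (forall r, decomp_costs v r -> s <= r) -> s <= decomp_norm v.
Proof. by move=> s_lb; apply: lb_le_inf; [exact: decomp_costs_neq0 | exact: s_lb]. Qed.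

Lemma decomp_normD x y : decomp_norm (x + y) <= decomp_norm x + decomp_norm y.
Proof.
rewrite -lerBlDr; apply: decomp_norm_ge => r xr; rewrite lerBlDr -lerBlDl.
apply: decomp_norm_ge => s ys; rewrite lerBlDl.
exact/decomp_norm_le/decomp_costsD.
Qed.

Lemma decomp_normZ (c : R) x : 0 < c -> decomp_norm (c *: x) <= c * decomp_norm x.
Proof.
move=> c_gt0; rewrite mulrC -ler_pdivrMr //; apply: decomp_norm_ge => r xr.
rewrite ler_pdivrMr // mulrC -[c in c * r]gtr0_norm //.
exact/decomp_norm_le/decomp_costsZ.
Qed.

Lemma decomp_norm_tensor (z : 'I_k -> R) t : simple_mvec t ->
  decomp_norm (fun j => z j *: t) <= lpnorm p z * mnorm t.
Proof. by move=> s_t; apply/decomp_norm_le/decomp_costs_tensor. Qed.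

End DecompositionNorm.

Section Flatten.
Variables (R : realType) (k m d : nat).

Definition kflat (u : kmvec R k m d) : 'I_k * incr m d -> R := fun t => u t.1 t.2.

Definition kunflat (x : 'I_k * incr m d -> R) : kmvec R k m d :=
  fun j => [ffun I => x (j, I)].

Lemma kflatK : cancel kflat kunflat.
Proof. by move=> u; apply/funext => j; apply/ffunP => I; rewrite ffunE. Qed.

Lemma kunflatD x y : kunflat (x + y) = kunflat x + kunflat y.
Proof. by apply/funext => j; apply/ffunP => I; rewrite !ffunE. Qed.

Lemma kunflatZ (c : R) x : kunflat (c *: x) = c *: kunflat x.
Proof. by apply/funext => j; apply/ffunP => I; rewrite !ffunE. Qed.

Lemma kpair_kunflat a u : kpair (kunflat a) u = fdot a (kflat u).
Proof.
rewrite /kpair /mpair /fdot (pair_bigA _ (fun j I => kunflat a j I * u j I)).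
by apply: eq_bigr => -[j I] _; rewrite ffunE.
Qed.

End Flatten.

Section MassDuality.
Variables (R : realType) (k m d : nat) (p : \bar R).
Hypotheses (m_gt0 : (0 < m)%N) (p_ge1 : (1%:E <= p)%E).
Implicit Types (v : kmvec R k m d) (w : kmvec R k m d).

Lemma comass_le1_pair w t : (comass p w <= 1)%E -> simple_mvec t ->
  lpnorm (conj_exp p) (fun j => mpair (w j) t) <= mnorm t.
Proof.
move=> w_le1 s_t; have q_gt0 : (0 < conj_exp p)%E.
  by apply: lt_le_trans (conj_exp_ge1 p_ge1); rewrite lte_fin.
have [t0|t_neq0] := eqVneq (mnorm t) 0.
  by rewrite t0 (mnorm_eq0 t0); under eq_fun do rewrite mpair0r; rewrite lpnorm0.
have t_gt0 : 0 < mnorm t by rewrite lt0r t_neq0 mnorm_ge0.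
have : ((lpnorm (conj_exp p) (fun j => mpair (w j) ((mnorm t)^-1 *: t)))%:E <= 1)%E.
  apply: le_trans w_le1; apply: ereal_sup_ubound; exists ((mnorm t)^-1 *: t) => //.
  split; first exact: simple_mvecZ.
  by rewrite mnormZ ger0_norm ?invr_ge0 ?mnorm_ge0 // mulVf.
under eq_fun do rewrite mpairZr.
rewrite lee_fin lpnormZ // ger0_norm ?invr_ge0 ?mnorm_ge0 //.
move=> /(ler_wpM2l (mnorm_ge0 t)).
by rewrite mulrA (mulfV t_neq0) mul1r mulr1.
Qed.

Lemma kpair_le_cost w v r : (comass p w <= 1)%E -> decomp_costs p v r -> kpair w v <= r.
Proof.
move=> w_le1 [l [z [vs [s_vs [e ->]]]]].
rewrite /kpair (eq_bigr (fun j => \sum_(i < l) z i j * mpair (w j) (vs i))) => [|j _].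
  rewrite exchange_big /=; apply: ler_sum => i _; apply: le_trans (holder _ _ p_ge1) _.
  by rewrite ler_wpM2l ?lpnorm_ge0 ?comass_le1_pair.
by rewrite e mpair_sumr.
Qed.

Lemma mass_le_decomp_norm v : (mass p v <= (decomp_norm p v)%:E)%E.
Proof.
apply: ge_ereal_sup => _ [w w_le1 <-]; rewrite lee_fin.
by apply: decomp_norm_ge => r; exact: kpair_le_cost.
Qed.

Lemma decomp_norm_le_mass v : ((decomp_norm p v)%:E <= mass p v)%E.
Proof.
pose pN (x : 'I_k * incr m d -> R) := decomp_norm p (kunflat x).
have pN_subadd x y : pN (x + y) <= pN x + pN y.
  by rewrite /pN kunflatD; exact: decomp_normD.
have pN_homo c x : 0 < c -> pN (c *: x) <= c * pN x.
  by rewrite /pN kunflatZ; exact: decomp_normZ.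
have [a [a_le a_v]] := hahn_banach pN_subadd pN_homo (kflat v).
apply: ereal_sup_ubound; exists (kunflat a); last by rewrite kpair_kunflat a_v /pN kflatK.
apply: ge_ereal_sup => _ [t [s_t t_le1] <-]; rewrite lee_fin.
apply: lpnorm_conj_le1 p_ge1 _ => z.
have -> : \sum_i z i * mpair (kunflat a i) t = kpair (kunflat a) (fun j => z j *: t).
  by apply: eq_bigr => j _; rewrite mpairZr.
rewrite kpair_kunflat; apply: le_trans (a_le _) _; rewrite /pN kflatK.
apply: le_trans (decomp_norm_tensor _ _ s_t) _.
by rewrite ler_piMr ?lpnorm_ge0.
Qed.

End MassDuality.

Theorem lemmaA2 (R : realType) (k m d : nat) (p : \bar R)
  (hk : (1 <= k)%N) (hm : (1 <= m)%N) (hmd : (m <= d)%N)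
  (hp : (1%:E <= p)%E) (v : kmvec R k m d) :
  mass p v = decomp_inf p v.
Proof.
rewrite decomp_infE; apply/le_anti/andP; split.
  exact: mass_le_decomp_norm hm hp v.
exact: decomp_norm_le_mass hp v.
Qed.
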